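(* Consider a CPM scheme with alphabet size $M>2$, impulse length $L$ and modulation index $h=Q/P$ ($Q,P$ relatively prime positive integers). Suppose that every difference sequence $\mathbf{b}$ achieving the minimum Euclidean distance of the scheme has length $\Delta(\mathbf{b})=2$ and $b_2=\pm1$, and that $P$ is a multiple of $M$. Then there exists a partition of the set of trellis edges into $M$ sets $\mathcal{T}(0),\dots,\mathcal{T}(M-1)$, each of cardinality $PM^{L-1}$, such that (i) for every difference sequence $\mathbf{b}$ achieving the minimum Euclidean distance, any two edges adjacent in $\mathcal{G}(\mathbf{b})$ lie in the same set, and (ii) any two distinct edges leaving the same trellis state lie in different sets.
   Context: CPM trellis (Rimoldi decomposition). Fix $M\ge2$, $L\ge1$, relatively prime positive integers $Q,P$, $h=Q/P$. Input symbols $a_n\in\{0,\dots,M-1\}$. The state at time $n$ is $(a_{n-L+1},\dots,a_{n-1};\beta_n)$ with $\beta_n\in\{0,\dots,P-1\}$ and $\beta_{n+1}=(\beta_n+Qa_{n-L+1})_P$ ($(l)_P$ = $l$ mod $P$). A trellis edge is $(\boldsymbol{\alpha},\beta)$, $\boldsymbol{\alpha}=(\alpha_1,\dots,\alpha_L)\in\{0,\dots,M-1\}^L$, $\beta$ the phase of its starting state $((\alpha_1,\dots,\alpha_{L-1});\beta)$; its ending state is $((\alpha_2,\dots,\alpha_L);(\beta+Q\alpha_1)_P)$. There are $PM^L$ edges. CPM signal: an input sequence $(a_n)$ produces $x(t)=\exp\!\big(j\,2\pi h\sum_n(2a_n-(M-1))\,q(t-nT)\big)$ (up to a constant amplitude),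 where $T>0$ and the phase pulse $q$ is continuous with $q(t)=0$ for $t\le0$ and $q(t)=1/2$ for $t\ge LT$. A difference sequence is $\mathbf{b}=(b_1,\dots,b_\Delta)$ with entries in $\{-(M-1),\dots,M-1\}$, $b_1\ne0$, $b_\Delta\ne0$, admitting error events (i.e. $\sum_n b_n\equiv0\pmod P$); $\Delta(\mathbf{b})=\Delta$. An error event generated by $\mathbf{b}$ is a pair of trellis paths from a common starting state with inputs $a^{(1)},a^{(2)}$ such that $a^{(1)}_n-a^{(2)}_n=b_n$ for $1\le n\le\Delta$ and equal inputs afterwards, merging after $\Delta+L-1$ steps; an edge pair is the two edges at the same step. The squared Euclidean distance $\int|x^{(1)}(t)-x^{(2)}(t)|^2dt$ of an error event depends only on $\mathbf{b}$; the minimum Euclidean distance of the scheme is its minimum over all difference sequences. Graph $\mathcal{G}(\mathbf{b})$: vertices are trellis edges; two vertices are adjacent iff the edges have different starting states and form an edge pair of some error event generated by $\mathbf{b}$. *)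

From HB Require Import structures.
From mathcomp Require Import all_boot all_order all_algebra.
From mathcomp Require Import all_classical all_reals all_analysis.
Set Implicit Arguments. Unset Strict Implicit. Unset Printing Implicit Defensive.
Import Order.TTheory GRing.Theory Num.Theory.
Import numFieldNormedType.Exports.
Local Open Scope ring_scope.

(* A trellis edge (alpha, beta): alpha = (alpha_1,...,alpha_L) in {0..M-1}^L,
   beta in {0..P-1} the phase of its starting state. *)
Definition edge (M L P : nat) : finType := (L.-tuple 'I_M * 'I_P)%type.

(* Trellis states ((s_1,...,s_{L-1}); beta), represented as a pair
   (sequence of symbols, phase). *)
Definition state (M : nat) := (seq 'I_M * nat)%type.

Definition start_state (M L P : nat) (e : edge M L P) : state M :=
  (take L.-1 (tval e.1), val e.2).

Definition end_state (M L P Q : nat) (e : edge M L P) : state M :=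
  (drop 1 (tval e.1), ((val e.2 + Q * head 0%N (map val (tval e.1))) %% P)%N).

Definition input (M L P : nat) (e : edge M L P) : nat :=
  last 0%N (map val (tval e.1)).

Definition trellis_path (M L P Q : nat) (p : seq (edge M L P)) : bool :=
  sorted (fun e e' => end_state Q e == start_state e') p.

(* b = (b_1,...,b_Delta) (stored 0-indexed), entries in {-(M-1),...,M-1},
   b_1 <> 0, b_Delta <> 0, and sum b_n = 0 mod P. *)
Definition diff_seq (M P : nat) (b : seq int) : Prop :=
  [/\ (0 < size b)%N,
      all (fun x : int => `|x| <= (M.-1)%:Z) b,
      head 0 b != 0, last 0 b != 0 &
      (P%:Z %| \sum_(x <- b) x)%Z].

(* An error event generated by b: two trellis paths of Delta + L - 1 steps,
   from a common starting state, with inputs a1_n - a2_n = b_n for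
   1 <= n <= Delta, equal inputs afterwards, merging after Delta+L-1 steps. *)
Definition error_event (M L P Q : nat) (b : seq int)
    (p1 p2 : seq (edge M L P)) : Prop :=
  let D := size b in
  [/\ size p1 = (D + L - 1)%N /\ size p2 = (D + L - 1)%N,
      trellis_path Q p1 /\ trellis_path Q p2,
      omap (@start_state M L P) (ohead p1) = omap (@start_state M L P) (ohead p2),
      omap (@end_state M L P Q) (ohead (rev p1))
        = omap (@end_state M L P Q) (ohead (rev p2)) &
      (
      (forall k, (k < D)%N ->
         (nth 0%N (map (@input M L P) p1) k)%:Z
           - (nth 0%N (map (@input M L P) p2) k)%:Z = nth 0 b k) /\
      (forall k, (D <= k < D + L - 1)%N ->
         nth 0%N (map (@input M L P) p1) k = nth 0%N (map (@input M L P) p2) k))].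

(* Adjacency in the graph G(b): the two edges have different starting states
   and form an edge pair (edges at the same step) of some error event
   generated by b. *)
Definition G_adj (M L P Q : nat) (b : seq int) (e e' : edge M L P) : Prop :=
  start_state e <> start_state e' /\
  exists p1 p2 k, error_event Q b p1 p2 /\
    onth p1 k = Some e /\ onth p2 k = Some e'.

(* Phase difference between the two CPM signals of an error event generated
   by b (inputs a1, a2 with a1_n - a2_n = b_n):
   2 pi h sum_n (2 a1_n - (M-1)) q(t-nT) - 2 pi h sum_n (2 a2_n - (M-1)) q(t-nT)
   = 2 pi h sum_{n=1}^{Delta} 2 b_n q(t - nT),  with h = Q/P. *)
Definition phase_diff (R : realType) (Q P : nat) (T : R) (q : R -> R)
    (b : seq int) (t : R) : R :=
  2 * pi * (Q%:R / P%:R) *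
    \sum_(i < size b) (2 * (nth 0 b i)%:~R * q (t - (i.+1)%:R * T)).

(* Squared Euclidean distance int |x1(t) - x2(t)|^2 dt of an error event
   generated by b; |x1 - x2|^2 = |1 - exp(j phase_diff)|^2
   = (1 - cos phase_diff)^2 + (sin phase_diff)^2 (common unimodular factor
   cancels). *)
Definition sq_dist (R : realType) (Q P : nat) (T : R) (q : R -> R)
    (b : seq int) : \bar R :=
  (\int[@lebesgue_measure R]_t
     (((1 - cos (phase_diff Q P T q b t)) ^+ 2
        + (sin (phase_diff Q P T q b t)) ^+ 2)%:E))%E.

Definition achieves_min (R : realType) (M Q P : nat) (T : R) (q : R -> R)
    (b : seq int) : Prop :=
  diff_seq M P b /\
  forall b', diff_seq M P b' -> (sq_dist Q P T q b <= sq_dist Q P T q b')%E.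

From HB Require Import structures.
From mathcomp Require Import all_boot all_order all_algebra.
From mathcomp Require Import all_classical all_reals all_analysis.
From mathcomp Require Import zify ring.
Import Order.TTheory GRing.Theory Num.Theory.
Import numFieldNormedType.Exports.
Local Open Scope ring_scope.
Set Implicit Arguments. Unset Strict Implicit. Unset Printing Implicit Defensive.

(* Label an edge (alpha, beta) by its cumulative phase beta + Q (alpha_1 + ... + alpha_L)
   taken modulo M.  Along a trellis path this quantity grows by Q times the input of
   each new edge modulo P, so the two edges at step k >= 1 of an error event generated
   by b (with Delta(b) = 2) differ by Q (b_1 + b_2) = 0 modulo P, hence modulo M since
   M | P.  Two edges leaving the same state differ by Q times the difference of their
   inputs, which is nonzero modulo M because gcd(M, Q) = 1.  Injectivity on each state
   with M labels forces all label classes to have the size PM^(L-1) of the state set.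
   Only Delta(b) = 2 is used from the hypothesis on minimal difference sequences. *)

Lemma card_fiber_of_pair_injective (T U : finType) (n : nat)
    (f : T -> 'I_n) (g : T -> U) :
  injective (fun x => (f x, g x)) -> #|T| = (n * #|U|)%N ->
  forall i, #|[set x | f x == i]| = #|U|.
Proof.
move=> fg_inj cardT.
have fiber_le i : (#|[set x | f x == i]| <= #|U|)%N.
  rewrite -(@card_in_imset _ _ g) ?max_card // => x y.
  by rewrite !inE => /eqP fx /eqP fy gxy; apply: fg_inj; rewrite /= fx fy gxy.
have sum_fibers : (\sum_i #|[set x | f x == i]| = #|T|)%N.
  rewrite -sum1_card (partition_big f predT) //=; apply: eq_bigr => i _.
  by rewrite -sum1_card; apply: eq_bigl => x; rewrite inE.
have [_] := leqif_sum (fun i (_ : true) => leqif_eq (fiber_le i)).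
rewrite sum_fibers sum_nat_const card_ord -cardT eqxx => /esym/forallP all_eq i.
exact/eqP/(implyP (all_eq i)).
Qed.

Section CumulativePhase.

Variables M L P Q : nat.
Hypothesis L_gt0 : (0 < L)%N.
Implicit Types e : edge M L P.

Definition cum_phase e : nat := (val e.2 + Q * sumn (map val (tval e.1)))%N.

Lemma edge_symbolsE e :
  map val (tval e.1) = rcons (map val (take L.-1 (tval e.1))) (input e).
Proof.
rewrite /input; move: (tval e.1) (size_tuple e.1) => s.
rewrite -{1}(prednK L_gt0); case/lastP: s => [|s x] //; rewrite size_rcons => -[<-].
by rewrite -cats1 take_size_cat // map_cat last_cat cats1.
Qed.

Lemma input_lt e : (input e < M)%N.
Proof.
rewrite /input; move: (tval e.1) (size_tuple e.1) => s.
by case: s => [|x s] /=; [move=> L0; move: L_gt0; rewrite -L0|rewrite last_map].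
Qed.

Lemma cum_phase_same_start e e' : start_state e = start_state e' ->
  (cum_phase e)%:Z - (cum_phase e')%:Z = Q%:Z * ((input e)%:Z - (input e')%:Z).
Proof.
case=> Hs /val_inj Hb; rewrite /cum_phase !edge_symbolsE !sumn_rcons Hs Hb.
by rewrite !PoszD !PoszM; ring.
Qed.

Lemma cum_phase_step e e' : end_state Q e == start_state e' ->
  cum_phase e' = cum_phase e + Q * input e' %[mod P].
Proof.
case/eqP=> Hs Hb; rewrite /cum_phase /= edge_symbolsE sumn_rcons -Hb -Hs.
have : (0 < size (tval e.1))%N by rewrite size_tuple.
by case: (tval e.1) => [|x s] //= _; rewrite drop0 modnDml !mulnDr !addnA.
Qed.

Lemma edge_eq_of_start_input e e' :
  start_state e = start_state e' -> input e = input e' -> e = e'.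
Proof.
case=> Hs /val_inj Hb Hi.
have Ha : e.1 = e'.1.
  by apply/val_inj/(inj_map val_inj); rewrite edge_symbolsE [RHS]edge_symbolsE Hs Hi.
by case: e e' Ha Hb {Hs Hi} => [? ?] [? ?] /= -> ->.
Qed.

Lemma cum_phase_neq_same_start e e' : coprime M Q -> e != e' ->
  start_state e = start_state e' -> cum_phase e != cum_phase e' %[mod M].
Proof.
move=> coMQ ne_ee' Hs; apply: contra ne_ee' => /eqP eq_mod.
apply/eqP/edge_eq_of_start_input => //.
have dvd_diff : (M%:Z %| Q%:Z * ((input e)%:Z - (input e')%:Z))%Z.
  by rewrite -cum_phase_same_start // -eqz_mod_dvd !modz_nat eq_mod.
rewrite Gauss_dvdzr // dvdzE in dvd_diff.
have := input_lt e; have := input_lt e'.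
case: (ltngtP (input e) (input e')) dvd_diff => // lt_in /dvdn_leq; lia.
Qed.

Definition input_diff (p1 p2 : seq (edge M L P)) (j : nat) : int :=
  (nth 0%N (map (@input M L P) p1) j)%:Z - (nth 0%N (map (@input M L P) p2) j)%:Z.

Lemma cum_phase_paths p1 p2 x0 :
  trellis_path Q p1 -> trellis_path Q p2 -> size p1 = size p2 ->
  start_state (nth x0 p1 0) = start_state (nth x0 p2 0) ->
  forall k, (k < size p1)%N ->
  ((cum_phase (nth x0 p1 k))%:Z
     == (cum_phase (nth x0 p2 k))%:Z + Q%:Z * \sum_(j < k.+1) input_diff p1 p2 j
     %[mod P])%Z.
Proof.
have stepZ f f' : end_state Q f == start_state f' ->
    (P%:Z %| (cum_phase f')%:Z - (cum_phase f)%:Z - Q%:Z * (input f')%:Z)%Z.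
  move/cum_phase_step => H.
  have : ((cum_phase f')%:Z == (cum_phase f + Q * input f')%N %[mod P])%Z.
    by rewrite !modz_nat H.
  by rewrite eqz_mod_dvd PoszD PoszM opprD addrA.
move=> /(sortedP x0) t1 /(sortedP x0) t2 Hs start0.
elim=> [|k IH] Hk; rewrite eqz_mod_dvd.
  rewrite big_ord1 /input_diff !(nth_map x0) -?Hs //.
  by rewrite opprD addrA cum_phase_same_start // subrr dvdz0.
have Hk' : (k < size p1)%N by apply: ltnW.
have S1 := stepZ _ _ (t1 k Hk).
have S2 := stepZ _ _ (t2 k (leq_trans Hk (eq_leq Hs))).
have I := IH Hk'; rewrite eqz_mod_dvd in I; rewrite big_ord_recr /=.
set A := \sum_(j < k.+1) _ in I *.
rewrite /input_diff !(nth_map x0) -?Hs //.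
set u1 := (cum_phase (nth x0 p1 k.+1))%:Z in S1 *.
set u2 := (cum_phase (nth x0 p2 k.+1))%:Z in S2 *.
set v1 := (cum_phase (nth x0 p1 k))%:Z in S1 I *.
set v2 := (cum_phase (nth x0 p2 k))%:Z in S2 I *.
set i1 := (input (nth x0 p1 k.+1))%:Z in S1 *.
set i2 := (input (nth x0 p2 k.+1))%:Z in S2 *.
have -> : u1 - (u2 + Q%:Z * (A + (i1 - i2))) =
   (v1 - (v2 + Q%:Z * A)) + (u1 - v1 - Q%:Z * i1) - (u2 - v2 - Q%:Z * i2) by ring.
by rewrite rpredB // rpredD.
Qed.

Lemma error_event_input_diff_sum b p1 p2 k :
  error_event Q b p1 p2 -> (size b <= k.+1 <= size p1)%N ->
  \sum_(j < k.+1) input_diff p1 p2 j = \sum_(x <- b) x.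
Proof.
case=> [[s1 _] _ _ _ [Hin Hout]] /andP[bk kp].
rewrite -(big_mkord xpredT) (big_cat_nat (leq0n _) bk) /= [RHS](big_nth 0).
rewrite [X in _ + X]big1_seq ?addr0 => [|j]; first exact: eq_big_nat.
rewrite mem_index_iota => /andP[bj jk].
by rewrite /input_diff Hout ?subrr //; apply/andP; split; lia.
Qed.

Lemma G_adj_cum_phase b e e' : (size b <= 2)%N -> diff_seq M P b ->
  G_adj Q b e e' -> cum_phase e = cum_phase e' %[mod P].
Proof.
move=> b_le2 [_ _ _ _ P_sum] [start_neq [p1 [p2 [k [ev [E1 E2]]]]]].
have Hk : (k < size p1)%N by rewrite -onthTE E1.
rewrite -(onth_nth e _ _ _ E1) -(onth_nth e _ _ _ E2) in start_neq *.
have [[s1 s2] [t1 t2] same_start _ _] := ev.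
have s12 : size p1 = size p2 by rewrite s1 s2.
have start0 : start_state (nth e p1 0) = start_state (nth e p2 0).
  by move: same_start Hk s12; case: (p1) (p2) => [|a1 q1] [|a2 q2] //= /Some_inj.
case: k Hk start_neq {E1 E2} => [|k] Hk start_neq; first by [].
have := cum_phase_paths t1 t2 s12 start0 Hk.
rewrite (error_event_input_diff_sum ev); last by rewrite Hk; lia.
rewrite eqz_mod_dvd => D; apply/eqP; rewrite -eqz_nat -!modz_nat eqz_mod_dvd.
set c := (cum_phase _)%:Z in D *; set c' := (cum_phase _)%:Z in D *.
have -> : c - c' = c - (c' + Q%:Z * \sum_(x <- b) x) + Q%:Z * \sum_(x <- b) x by ring.
by rewrite rpredD // dvdz_mull.
Qed.

Definition start_code e : {ffun 'I_L.-1 -> 'I_M} * 'I_P :=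
  ([ffun j => tnth e.1 (widen_ord (leq_pred L) j)], e.2).

Lemma start_state_eq_of_code e e' :
  start_code e = start_code e' -> start_state e = start_state e'.
Proof.
case=> Hf H2; rewrite /start_state H2; congr pair.
have x0 : 'I_M by case: (tval e.1) (size_tuple e.1) L_gt0 => [<-|x _] //.
apply: (@eq_from_nth _ x0); first by rewrite !size_take !size_tuple.
move=> j; rewrite size_take size_tuple ltn_predL L_gt0 => lt_jL.
rewrite !(nth_take x0 lt_jL).
by have := congr1 (fun g : {ffun _ -> _} => g (Ordinal lt_jL)) Hf; rewrite !ffunE !(tnth_nth x0).
Qed.

Lemma card_class_of_start_injective (c : edge M L P -> 'I_M) :
  (forall e e', e != e' -> start_state e = start_state e' -> c e != c e') ->
  forall i, #|[set e | c e == i]| = (P * M ^ L.-1)%N.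
Proof.
move=> c_neq i; rewrite (card_fiber_of_pair_injective (g := start_code)).
- by rewrite card_prod card_ffun !card_ord mulnC.
- move=> e e' eq_ce; have /= ce := congr1 fst eq_ce.
  have se := start_state_eq_of_code (congr1 snd eq_ce).
  by case: (eqVneq e e') => // ne; have := c_neq e e' ne se; rewrite ce eqxx.
by rewrite !card_prod card_ffun card_tuple !card_ord mulnA -expnS prednK.
Qed.

End CumulativePhase.

Theorem proposition4 (R : realType) (M L Q P : nat) (T : R) (q : R -> R) :
  (2 < M)%N -> (1 <= L)%N -> (0 < Q)%N -> (0 < P)%N -> coprime Q P ->
  0 < T -> continuous q ->
  (forall t, t <= 0 -> q t = 0) ->
  (forall t, L%:R * T <= t -> q t = 1 / 2) ->
  (forall b, achieves_min M Q P T q b ->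
     size b = 2%N /\ (nth 0 b 1 = 1 \/ nth 0 b 1 = -1)) ->
  (M %| P)%N ->
  exists part : edge M L P -> 'I_M,
    [/\ forall i : 'I_M, #|[set e | part e == i]| = (P * M ^ L.-1)%N,
        forall b, achieves_min M Q P T q b ->
          forall e e', G_adj Q b e e' -> part e = part e' &
        forall e e' : edge M L P, e != e' -> start_state e = start_state e' ->
          part e != part e'].
Proof.
move=> M_gt2 L_gt0 _ _ coQP _ _ _ _ min_short M_dvd_P.
have M_gt0 : (0 < M)%N by apply: ltn_trans M_gt2.
have coMQ : coprime M Q by rewrite coprime_sym (coprime_dvdr M_dvd_P coQP).
pose class (e : edge M L P) := Ordinal (ltn_pmod (cum_phase Q e) M_gt0).
have class_neq e e' : e != e' -> start_state e = start_state e' -> class e != class e'.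
  by move=> ne se; rewrite -val_eqE /=; exact: cum_phase_neq_same_start.
exists class; split => //.
- exact: card_class_of_start_injective.
- move=> b b_min e e' adj; apply: val_inj => /=.
  have [size_b _] := min_short b b_min.
  by rewrite -(modn_dvdm _ M_dvd_P) (G_adj_cum_phase _ _ b_min.1 adj) ?size_b // modn_dvdm.
Qed.
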